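(* For every finite simple graph $G$, $\vartheta(G)=\alpha_{\mathcal S}(G)$.
   Context: $G$ has vertex set $\{1,\dots,n\}$. A weighted adjacency matrix of $G$ is a real symmetric $n\times n$ matrix $A$ with $A_{ii}=0$ and $A_{ij}=0$ whenever $i\ne j$ are non-adjacent. $\vartheta(G)=\inf_B\lambda_{\max}(B)$ over real symmetric $B$ with $B_{ij}=1$ whenever $i=j$ or $i,j$ non-adjacent (the Lovász theta function). With $\boldsymbol 1$ the all-ones vector and $\mathcal S_n=\{\boldsymbol v\in\mathbb R^n:\langle\boldsymbol 1,\boldsymbol v\rangle=|\boldsymbol v|^2\}$, the spherical independence number is $\alpha_{\mathcal S}(G)=\inf_A\sup\{|\boldsymbol v|^2:\boldsymbol v\in\mathcal S_n,\ \langle\boldsymbol v,A\boldsymbol v\rangle=0\}$, the infimum over all weighted adjacency matrices $A$ of $G$. *)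

From HB Require Import structures.
From mathcomp Require Import all_boot all_order all_algebra.
From mathcomp Require Import all_classical all_reals.
Set Implicit Arguments. Unset Strict Implicit. Unset Printing Implicit Defensive.
Import Order.TTheory GRing.Theory Num.Theory.
Local Open Scope ring_scope.
Local Open Scope classical_set_scope.

Section Defs.
Variable R : realType.

Definition simple_graph (n : nat) (adj : rel 'I_n) : Prop :=
  (forall i, ~~ adj i i) /\ (forall i j, adj i j = adj j i).

Definition symmetric_mx (n : nat) (M : 'M[R]_n) : Prop := M^T = M.

Definition weighted_adj (n : nat) (adj : rel 'I_n) (A : 'M[R]_n) : Prop :=
  symmetric_mx A /\ (forall i, A i i = 0) /\
  (forall i j, i != j -> ~~ adj i j -> A i j = 0).

Definition lambda_max (n : nat) (B : 'M[R]_n) : R :=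
  sup [set a : R | eigenvalue B a].

Definition theta_admissible (n : nat) (adj : rel 'I_n) (B : 'M[R]_n) : Prop :=
  symmetric_mx B /\ (forall i j, (i == j) || ~~ adj i j -> B i j = 1).

Definition lovasz_theta (n : nat) (adj : rel 'I_n) : R :=
  inf [set lambda_max B | B in [set B : 'M[R]_n | theta_admissible adj B]].

Definition ones_dot (n : nat) (v : 'cV[R]_n) : R := \sum_i v i 0.
Definition sqnorm (n : nat) (v : 'cV[R]_n) : R := \sum_i v i 0 ^+ 2.
Definition quad_form (n : nat) (A : 'M[R]_n) (v : 'cV[R]_n) : R :=
  (v^T *m A *m v) 0 0.

Definition sphereS (n : nat) : set 'cV[R]_n :=
  [set v | ones_dot v = sqnorm v].

Definition sph_value (n : nat) (A : 'M[R]_n) : R :=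
  sup [set sqnorm v | v in [set v | @sphereS n v /\ quad_form A v = 0]].

Definition spherical_indep (n : nat) (adj : rel 'I_n) : R :=
  inf [set sph_value A | A in [set A : 'M[R]_n | weighted_adj adj A]].

End Defs.

(* With [J] the all-ones matrix, for an admissible [B] the matrix [B - J] is a
   weighted adjacency matrix, and every [v] of the sphere with
   [v^T (B - J) v = 0] satisfies
   [|v|^4 = <1,v>^2 = v^T B v <= lambda_max(B) |v|^2], so [alpha_S <= theta].
   Conversely, let [A] be a weighted adjacency matrix with spherical value [s].
   Rescaling onto the sphere shows that the form [s|z|^2 - <1,z>^2] of
   [sI - J] is nonnegative on the cone [z^T A z = 0].  Having zero diagonal,
   [A] is zero or indefinite, so Finsler's lemma yields [t] with [sI - J + tA]
   positive semidefinite; [B = J - tA] is then admissible with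
   [lambda_max(B) <= s].
   The largest eigenvalue is reached through Rayleigh bounds: the least [l]
   with [x^T B x <= l |x|^2] is an eigenvalue, for otherwise [lI - B] would be
   invertible, hence coercive, and [l] could be lowered. *)

From mathcomp Require Import all_boot all_order all_algebra.
From mathcomp Require Import all_classical all_reals.
From mathcomp Require Import ring lra.
Import Order.TTheory GRing.Theory Num.Theory.
Set Implicit Arguments. Unset Strict Implicit. Unset Printing Implicit Defensive.
Local Open Scope ring_scope.
Local Open Scope classical_set_scope.

Section QuadraticForms.
Variables (R : realType) (n : nat).
Implicit Types (a r : R) (A B : 'M[R]_n) (x y : 'cV[R]_n).

Definition bform A x y : R := (x^T *m A *m y) 0 0.

Lemma bformE A x y : bform A x y = \sum_i \sum_j x i 0 * A i j * y j 0.
Proof.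
rewrite /bform mxE exchange_big; apply: eq_bigr => j _.
by rewrite mxE mulr_suml; apply: eq_bigr => i _; rewrite !mxE.
Qed.

Lemma bformDl A x y z : bform A (x + y) z = bform A x z + bform A y z.
Proof. by rewrite /bform linearD !mulmxDl mxE. Qed.

Lemma bformDr A x y z : bform A z (x + y) = bform A z x + bform A z y.
Proof. by rewrite /bform mulmxDr mxE. Qed.

Lemma bformZl A a x y : bform A (a *: x) y = a * bform A x y.
Proof. by rewrite /bform linearZ -!scalemxAl mxE. Qed.

Lemma bformZr A a x y : bform A x (a *: y) = a * bform A x y.
Proof. by rewrite /bform -!scalemxAr mxE. Qed.

Lemma bform_sym A x y : A^T = A -> bform A y x = bform A x y.
Proof.
have tr (M : 'M[R]_1) : M 0 0 = M^T 0 0 by rewrite mxE.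
by move=> sA; rewrite /bform tr !trmx_mul trmxK sA mulmxA.
Qed.

Lemma bform_delta A i j : bform A (delta_mx i 0) (delta_mx j 0) = A i j.
Proof. by rewrite /bform trmx_delta -rowE -colE !mxE. Qed.

Lemma quad_form0 A : quad_form A 0 = 0.
Proof. by rewrite /quad_form mulmx0 mxE. Qed.

Lemma quad_formDl A B x : quad_form (A + B) x = quad_form A x + quad_form B x.
Proof. by rewrite /quad_form mulmxDr mulmxDl mxE. Qed.

Lemma quad_formZl a A x : quad_form (a *: A) x = a * quad_form A x.
Proof. by rewrite /quad_form -scalemxAr -scalemxAl mxE. Qed.

Lemma quad_formBl A B x : quad_form (A - B) x = quad_form A x - quad_form B x.
Proof. by rewrite -scaleN1r quad_formDl quad_formZl mulN1r. Qed.

Lemma quad_formZr A a x : quad_form A (a *: x) = a ^+ 2 * quad_form A x.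
Proof. by rewrite /quad_form -/(bform _ _ _) bformZl bformZr mulrA -expr2. Qed.

Lemma quad_form_expand A x y r : A^T = A ->
  quad_form A (x + r *: y) =
  quad_form A x + 2 * r * bform A x y + r ^+ 2 * quad_form A y.
Proof.
move=> sA; rewrite /quad_form -!/(bform _ _ _).
by rewrite bformDl !bformDr !bformZl !bformZr (bform_sym _ _ sA); ring.
Qed.

Lemma sqnormE x : sqnorm x = (x^T *m x) 0 0.
Proof. by rewrite mxE; apply: eq_bigr => i _; rewrite mxE expr2. Qed.

Lemma quad_form_scalar a x : quad_form a%:M x = a * sqnorm x.
Proof. by rewrite /quad_form mul_mx_scalar -scalemxAl mxE sqnormE. Qed.

Lemma quad_form_const1 x : quad_form (const_mx 1) x = ones_dot x ^+ 2.
Proof.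
rewrite /quad_form -/(bform _ _ _) bformE expr2 /ones_dot mulr_suml.
apply: eq_bigr => i _; rewrite mulr_sumr; apply: eq_bigr => j _.
by rewrite mxE mulr1.
Qed.

Lemma ones_dotZ a x : ones_dot (a *: x) = a * ones_dot x.
Proof. by rewrite /ones_dot mulr_sumr; apply: eq_bigr => i _; rewrite mxE. Qed.

Lemma sqnormZ a x : sqnorm (a *: x) = a ^+ 2 * sqnorm x.
Proof. by rewrite /sqnorm mulr_sumr; apply: eq_bigr => i _; rewrite mxE exprMn. Qed.

Lemma sqnorm_ge0 x : 0 <= sqnorm x.
Proof. by apply: sumr_ge0 => i _; rewrite sqr_ge0. Qed.

Lemma sqnorm0 : sqnorm (0 : 'cV[R]_n) = 0.
Proof. by rewrite /sqnorm big1 // => i _; rewrite mxE expr0n. Qed.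

Lemma sqnorm_eq0 x : (sqnorm x == 0) = (x == 0).
Proof.
apply/eqP/eqP => [x0|->]; last exact: sqnorm0.
apply/matrixP => i j; rewrite (ord1 j) mxE.
have := psumr_eq0P (fun k _ => sqr_ge0 (x k 0)) x0 (isT : true) => /(_ i).
by move/eqP; rewrite sqrf_eq0 => /eqP.
Qed.

Lemma sqnorm_gt0 x : x != 0 -> 0 < sqnorm x.
Proof. by rewrite lt_def sqnorm_ge0 sqnorm_eq0 andbT. Qed.

Lemma sqnorm_delta i : sqnorm (delta_mx i 0 : 'cV[R]_n) = 1.
Proof.
rewrite -[sqnorm _]mul1r -quad_form_scalar /quad_form -/(bform _ _ _).
by rewrite bform_delta mxE eqxx.
Qed.

Lemma sqr_coord_le_sqnorm x i : x i 0 ^+ 2 <= sqnorm x.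
Proof. by rewrite /sqnorm (bigD1 i) //= lerDl sumr_ge0 // => k _; rewrite sqr_ge0. Qed.

Lemma norm_coordM_le_sqnorm x i j : `|x i 0 * x j 0| <= sqnorm x.
Proof.
rewrite normrM; have [le|/ltW le] := lerP `|x i 0| `|x j 0|.
  apply: le_trans (sqr_coord_le_sqnorm x j).
  by rewrite -real_normK ?num_real // expr2 ler_wpM2r.
apply: le_trans (sqr_coord_le_sqnorm x i).
by rewrite -real_normK ?num_real // expr2 ler_wpM2l.
Qed.

Lemma quad_form_le A x : quad_form A x <= (\sum_i \sum_j `|A i j|) * sqnorm x.
Proof.
rewrite /quad_form -/(bform _ _ _) bformE mulr_suml; apply: ler_sum => i _.
rewrite mulr_suml; apply: ler_sum => j _.
rewrite mulrAC (le_trans (ler_norm _)) // normrM mulrC.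
by rewrite ler_wpM2l ?norm_coordM_le_sqnorm.
Qed.

End QuadraticForms.

Section PositiveSemidefinite.
Variables (R : realType) (n : nat).
Implicit Types (M : 'M[R]_n) (x y : 'cV[R]_n).

Lemma discriminant_le (a b c : R) : 0 <= c ->
  (forall r, 0 <= a + 2 * r * b + r ^+ 2 * c) -> b ^+ 2 <= a * c.
Proof.
move=> c0 h; have [c00|cn0] := eqVneq c 0.
  rewrite c00 mulr0 in h *; have [->|bn0] := eqVneq b 0; first by rewrite expr0n.
  have := h (- (a + 1) / (2 * b)).
  have -> : a + 2 * (- (a + 1) / (2 * b)) * b + (- (a + 1) / (2 * b)) ^+ 2 * 0 = -1.
    by field.
  by rewrite ler0N1.
have cp : 0 < c by rewrite lt_def cn0.
have := h (- b / c).
have -> : a + 2 * (- b / c) * b + (- b / c) ^+ 2 * c = (a * c - b ^+ 2) / c by field.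
by rewrite pmulr_lge0 ?invr_gt0 // subr_ge0.
Qed.

Lemma psd_cauchy_schwarz M x y : M^T = M -> (forall z, 0 <= quad_form M z) ->
  bform M x y ^+ 2 <= quad_form M x * quad_form M y.
Proof.
by move=> sM psd; apply: discriminant_le => // r; rewrite -quad_form_expand.
Qed.

(* Cauchy-Schwarz for [x] and [y := M^-1 x], as [x^T M y = |x|^2]. *)
Lemma psd_unitmx_coercive M : M^T = M -> (forall z, 0 <= quad_form M z) ->
  M \in unitmx -> exists2 d, 0 < d & forall x, d * sqnorm x <= quad_form M x.
Proof.
move=> sM psd Mu; set N := (invmx M)^T.
set K := \sum_i \sum_j `|N i j| + 1.
have K0 : 0 < K by rewrite ltr_pwDr // !sumr_ge0 // => i _; rewrite sumr_ge0.
exists K^-1; first by rewrite invr_gt0.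
move=> x; set y := invmx M *m x.
have Mxy : bform M x y = sqnorm x by rewrite /bform -mulmxA mulKVmx // sqnormE.
have Myy : quad_form M y <= K * sqnorm x.
  have -> : quad_form M y = quad_form N x.
    by rewrite /quad_form -mulmxA mulKVmx // /y trmx_mul.
  by rewrite (le_trans (quad_form_le _ _)) // ler_wpM2r ?sqnorm_ge0 ?lerDl.
have cs := psd_cauchy_schwarz x y sM psd; rewrite Mxy in cs.
have {}cs := le_trans cs (ler_wpM2l (psd x) Myy).
have [->|/sqnorm_gt0 xp] := eqVneq x 0; first by rewrite sqnorm0 quad_form0 mulr0.
rewrite -(ler_pM2l K0) mulrA mulfV ?gt_eqF // mul1r -(ler_pM2r xp) -expr2.
by rewrite (le_trans cs) // mulrCA mulrA.
Qed.

End PositiveSemidefinite.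

Lemma eigenvalue_unitmx (F : fieldType) n (B : 'M[F]_n) a :
  eigenvalue B a = (a%:M - B \notin unitmx).
Proof.
rewrite /eigenvalue /eigenspace -mxrank_eq0 mxrank_ker subn_eq0 -row_free_unit.
by rewrite /row_free -opprB mxrank_opp eqn_leq rank_leq_row.
Qed.

Section Rayleigh.
Variables (R : realType) (n : nat).
Implicit Types (B : 'M[R]_n.+1) (x : 'cV[R]_n.+1).

Definition rayleigh_bounds B := [set l : R | forall x, quad_form B x <= l * sqnorm x].

Lemma rayleigh_bounds_lbound B : lbound (rayleigh_bounds B) (B 0 0).
Proof.
move=> l /(_ (delta_mx 0 0)).
by rewrite /quad_form -/(bform _ _ _) bform_delta sqnorm_delta mulr1.
Qed.

Lemma rayleigh_bounds_neq0 B : rayleigh_bounds B !=set0.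
Proof. by exists (\sum_i \sum_j `|B i j|) => x; apply: quad_form_le. Qed.

Lemma rayleigh_bounds_inf B : rayleigh_bounds B (inf (rayleigh_bounds B)).
Proof.
move=> x; rewrite leNgt; apply/negP => lt_inf_x.
have xp : 0 < sqnorm x.
  apply: sqnorm_gt0; apply: contraTneq lt_inf_x => ->.
  by rewrite quad_form0 sqnorm0 mulr0 ltxx.
have : lbound (rayleigh_bounds B) (quad_form B x / sqnorm x).
  by move=> l Sl; rewrite ler_pdivrMr // Sl.
move/(lb_le_inf (rayleigh_bounds_neq0 B)).
by rewrite ler_pdivrMr // leNgt lt_inf_x.
Qed.

Lemma rayleigh_eigenvalue B : B^T = B -> eigenvalue B (inf (rayleigh_bounds B)).
Proof.
move=> sB; set mu := inf _; rewrite eigenvalue_unitmx; apply/negP => Mu.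
have quadM x : quad_form (mu%:M - B) x = mu * sqnorm x - quad_form B x.
  by rewrite quad_formBl quad_form_scalar.
have sM : (mu%:M - B)^T = mu%:M - B by rewrite linearB /= tr_scalar_mx sB.
have psd z : 0 <= quad_form (mu%:M - B) z.
  by rewrite quadM subr_ge0 rayleigh_bounds_inf.
have [d d0 coercive] := psd_unitmx_coercive sM psd Mu.
have : rayleigh_bounds B (mu - d).
  by move=> x; have := coercive x; rewrite quadM mulrBl; lra.
have lb : has_lbound (rayleigh_bounds B) by exists (B 0 0); apply: rayleigh_bounds_lbound.
by move/(ge_inf lb); rewrite -/mu; lra.
Qed.

End Rayleigh.

Section LambdaMax.
Variable R : realType.

Lemma eigenvalue_quad_form n (B : 'M[R]_n) a : eigenvalue B a ->
  exists2 x : 'cV_n, x != 0 & quad_form B x = a * sqnorm x.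
Proof.
move=> /eigenvalueP [v vB vn0]; exists v^T; first by rewrite trmx_eq0.
by rewrite /quad_form trmxK vB -scalemxAl mxE sqnormE trmxK.
Qed.

Lemma eigenvalue_le_rayleigh n (B : 'M[R]_n) s a :
  (forall x : 'cV_n, quad_form B x <= s * sqnorm x) -> eigenvalue B a -> a <= s.
Proof.
move=> le_s /eigenvalue_quad_form [x /sqnorm_gt0 xp qx].
by have := le_s x; rewrite qx ler_pM2r.
Qed.

Lemma lambda_max_le n (B : 'M[R]_n) s : 0 <= s ->
  (forall x : 'cV_n, quad_form B x <= s * sqnorm x) -> lambda_max B <= s.
Proof.
move=> s0 le_s; rewrite /lambda_max.
have [ne|/nonemptyPn->] := pselect ([set a | eigenvalue B a] !=set0).
  by apply: ge_sup => // a; apply: eigenvalue_le_rayleigh.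
by rewrite sup0.
Qed.

Lemma lambda_max_mx0 (B : 'M[R]_0) : lambda_max B = 0.
Proof.
rewrite /lambda_max (_ : [set a | _] = set0) ?sup0 //.
by apply/seteqP; split => a //=; rewrite /eigenvalue thinmx0 eqxx.
Qed.

Lemma lambda_max_rayleigh n (B : 'M[R]_n) x : B^T = B ->
  quad_form B x <= lambda_max B * sqnorm x.
Proof.
case: n B x => [|m] B x sB.
  by rewrite /quad_form -/(bform _ _ _) bformE big_ord0 /sqnorm big_ord0 mulr0.
pose mu := inf (rayleigh_bounds B).
suff -> : lambda_max B = mu by apply: rayleigh_bounds_inf.
have ub a : eigenvalue B a -> a <= mu.
  by apply: eigenvalue_le_rayleigh; apply: rayleigh_bounds_inf.
have ev := rayleigh_eigenvalue sB; apply/le_anti/andP; split.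
  by apply: ge_sup => //; exists mu.
by apply: ub_le_sup => //; exists mu.
Qed.

End LambdaMax.

Section Finsler.
Variable R : realType.

Lemma opposite_roots (a b c : R) : 0 < a -> c < 0 ->
  exists r1 r2, [/\ r2 < 0 < r1, a + 2 * r1 * b + r1 ^+ 2 * c = 0,
    a + 2 * r2 * b + r2 ^+ 2 * c = 0 & r1 * r2 * c = a].
Proof.
move=> a0 c0; set D := b ^+ 2 - a * c.
have D0 : 0 < D by rewrite /D; nra.
set sq := Num.sqrt D; have sq2 : sq ^+ 2 = D by rewrite sqr_sqrtr // ltW.
have sq_gt_b : `|b| < sq.
  rewrite -(ltr_pXn2r (isT : (0 < 2)%N)) ?nnegrE ?sqrtr_ge0 //.
  by rewrite sq2 real_normK ?num_real // /D; nra.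
have cn0 : c != 0 by rewrite lt_eqF.
exists ((- b - sq) / c), ((- b + sq) / c).
have /andP[b_lt b_gt] : - sq < b < sq by rewrite -ltr_norml.
split.
- by rewrite ltr_ndivrMr // mul0r ltr_ndivlMr // mul0r; apply/andP; split; lra.
- apply: (mulfI cn0); rewrite mulr0.
  have -> : c * (a + 2 * ((- b - sq) / c) * b + ((- b - sq) / c) ^+ 2 * c) = sq ^+ 2 - D.
    by rewrite /D; field.
  by rewrite sq2 subrr.
- apply: (mulfI cn0); rewrite mulr0.
  have -> : c * (a + 2 * ((- b + sq) / c) * b + ((- b + sq) / c) ^+ 2 * c) = sq ^+ 2 - D.
    by rewrite /D; field.
  by rewrite sq2 subrr.
- apply: (mulfI cn0).
  have -> : c * ((- b - sq) / c * ((- b + sq) / c) * c) = b ^+ 2 - sq ^+ 2 by field.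
  by rewrite sq2 /D; ring.
Qed.

Lemma nonneg_at_roots (r1 r2 p q s : R) : r2 < 0 < r1 ->
  0 <= p + 2 * r1 * q + r1 ^+ 2 * s -> 0 <= p + 2 * r2 * q + r2 ^+ 2 * s ->
  0 <= p - r1 * r2 * s.
Proof.
move=> /andP[r2_lt0 r1_gt0] f1 f2.
have r12 : 0 < r1 - r2 by lra.
rewrite -(pmulr_rge0 _ r12).
have -> : (r1 - r2) * (p - r1 * r2 * s) =
  - r2 * (p + 2 * r1 * q + r1 ^+ 2 * s) + r1 * (p + 2 * r2 * q + r2 ^+ 2 * s) by ring.
by rewrite addr_ge0 // mulr_ge0 // ?oppr_ge0 ltW.
Qed.

Section Matrices.
Variable n : nat.
Implicit Types (A P Q : 'M[R]_n) (x y z : 'cV[R]_n).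

(* [Q] vanishes at [x + r1 y] and [x + r2 y] with [r2 < 0 < r1]; the weighted
   sum [-r2 P(x + r1 y) + r1 P(x + r2 y) >= 0] equals
   [(r1 - r2) (P(x) - r1 r2 P(y))], and [r1 r2 Q(y) = Q(x)]. *)
Lemma finsler_pair P Q x y : P^T = P -> Q^T = Q ->
  (forall z, quad_form Q z = 0 -> 0 <= quad_form P z) ->
  0 < quad_form Q x -> quad_form Q y < 0 ->
  0 <= quad_form P x * (- quad_form Q y) + quad_form P y * quad_form Q x.
Proof.
move=> sP sQ PQ Qx Qy.
have [r1 [r2 [r12 Q1 Q2 <-]]] := opposite_roots (bform Q x y) Qx Qy.
have P_root r : quad_form Q x + 2 * r * bform Q x y + r ^+ 2 * quad_form Q y = 0 ->
    0 <= quad_form P x + 2 * r * bform P x y + r ^+ 2 * quad_form P y.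
  by rewrite -!quad_form_expand // => /PQ.
have := nonneg_at_roots r12 (P_root _ Q1) (P_root _ Q2).
set d := _ - _ => d0; have -> : quad_form P x * - quad_form Q y +
  quad_form P y * (r1 * r2 * quad_form Q y) = - quad_form Q y * d by rewrite /d; ring.
by rewrite mulr_ge0 // oppr_ge0 ltW.
Qed.

Lemma finsler P Q : P^T = P -> Q^T = Q ->
  (forall z, quad_form Q z = 0 -> 0 <= quad_form P z) ->
  (exists x, 0 < quad_form Q x) -> (exists y, quad_form Q y < 0) ->
  exists t, forall x, 0 <= quad_form P x + t * quad_form Q x.
Proof.
move=> sP sQ PQ [x0 Qx0] [y0 Qy0].
pose L := [set - quad_form P x / quad_form Q x | x in [set x | 0 < quad_form Q x]].
have L_ub y : quad_form Q y < 0 -> ubound L (quad_form P y / (- quad_form Q y)).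
  move=> Qy _ [x /= Qx <-]; have := finsler_pair sP sQ PQ Qx Qy.
  rewrite ler_pdivlMr ?oppr_gt0 // mulrAC ler_pdivrMr //; lra.
have L_hub : has_ubound L by exists (quad_form P y0 / (- quad_form Q y0)); apply: L_ub.
have L0 : L !=set0 by exists (- quad_form P x0 / quad_form Q x0), x0.
exists (sup L) => x; have [Qx|Qx|Qx] := ltgtP (quad_form Q x) 0.
- have := ge_sup L0 (L_ub x Qx); rewrite ler_pdivlMr ?oppr_gt0 //; lra.
- have : L (- quad_form P x / quad_form Q x) by exists x.
  by move/(ub_le_sup L_hub); rewrite ler_pdivrMr //; lra.
- by rewrite Qx mulr0 addr0; apply: PQ.
Qed.

Lemma zero_diag_indefinite A : A^T = A -> (forall i, A i i = 0) -> A != 0 ->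
  (exists x, 0 < quad_form A x) /\ (exists y, quad_form A y < 0).
Proof.
move=> sA A_diag nA.
have /existsP[i /existsP[j Aij]] : [exists i, exists j, A i j != 0].
  apply: contraNT nA => /existsPn A0; apply/eqP/matrixP => i j.
  by have /existsPn/(_ j)/negPn/eqP -> := A0 i; rewrite mxE.
have Aij_gt0 : 0 < A i j ^+ 2 by rewrite exprn_even_gt0.
have quad_ij r : quad_form A (delta_mx i 0 + r *: delta_mx j 0) = 2 * r * A i j.
  rewrite quad_form_expand // /quad_form -!/(bform _ _ _) !bform_delta !A_diag.
  by rewrite mulr0 !addr0 add0r.
split.
  by exists (delta_mx i 0 + A i j *: delta_mx j 0); rewrite quad_ij -mulrA -expr2 mulr_gt0.
exists (delta_mx i 0 - A i j *: delta_mx j 0).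
by rewrite -scaleNr quad_ij mulrN mulNr -mulrA -expr2 oppr_lt0 mulr_gt0.
Qed.

End Matrices.
End Finsler.

Lemma inf_le_dominated (R : realType) (X Y : set R) :
  has_lbound X -> Y !=set0 -> (forall y, Y y -> exists2 x, X x & x <= y) ->
  inf X <= inf Y.
Proof.
move=> lbX Y0 XY; apply: lb_le_inf Y0 _ => y /XY [x Xx le_xy].
exact: le_trans (ge_inf lbX Xx) le_xy.
Qed.

Section SphericalIndependence.
Variables (R : realType) (n : nat) (adj : rel 'I_n).
Implicit Types (A B : 'M[R]_n) (v z : 'cV[R]_n).
Local Notation J := (const_mx 1 : 'M[R]_n).

Lemma sqnorm_le_dim v : sphereS v -> sqnorm v <= n%:R.
Proof.
rewrite /sphereS /= => Sv.
have : \sum_i (2 * v i 0) <= \sum_i (v i 0 ^+ 2 + 1).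
  by apply: ler_sum => i _; have := sqr_ge0 (v i 0 - 1); nra.
rewrite big_split /= -mulr_sumr sumr_const card_ord -/(sqnorm v) -/(ones_dot v) Sv.
by rewrite -[1 *+ n]mulr_natr mul1r; lra.
Qed.

Lemma sph_value_ub A v : sphereS v -> quad_form A v = 0 -> sqnorm v <= sph_value A.
Proof.
move=> Sv Av; apply: ub_le_sup; last by exists v.
by exists n%:R => _ [w [Sw _] <-]; apply: sqnorm_le_dim.
Qed.

Lemma sphereS0 : sphereS (0 : 'cV[R]_n).
Proof. by rewrite /sphereS /= sqnorm0 /ones_dot big1 // => i _; rewrite mxE. Qed.

Lemma sph_value_ge0 A : 0 <= sph_value A.
Proof.
by rewrite -(sqnorm0 R n); apply: sph_value_ub; [apply: sphereS0 | apply: quad_form0].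
Qed.

Lemma ones_dot_sqr_le A z : quad_form A z = 0 ->
  ones_dot z ^+ 2 <= sph_value A * sqnorm z.
Proof.
move=> Az; have [->|zn0] := eqVneq z 0.
  by rewrite /ones_dot big1 ?expr0n ?sqnorm0 ?mulr0 // => i _; rewrite mxE.
have zp := sqnorm_gt0 zn0; pose c := ones_dot z / sqnorm z.
have := @sph_value_ub A (c *: z).
rewrite /sphereS /= ones_dotZ !sqnormZ quad_formZr Az mulr0.
have -> : c * ones_dot z = c ^+ 2 * sqnorm z by rewrite /c; field; rewrite gt_eqF.
have -> : c ^+ 2 * sqnorm z = ones_dot z ^+ 2 / sqnorm z by rewrite /c; field; rewrite gt_eqF.
by rewrite ler_pdivrMr // => ->.
Qed.

Lemma lambda_max_theta_ge0 B : theta_admissible adj B -> 0 <= lambda_max B.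
Proof.
case=> sB adjB; have {adjB} B1 i : B i i = 1 by rewrite adjB ?eqxx.
case: n B sB B1 => [|m] B sB B1; first by rewrite lambda_max_mx0.
have := lambda_max_rayleigh (delta_mx 0 0) sB.
by rewrite /quad_form -/(bform _ _ _) bform_delta sqnorm_delta mulr1 B1; apply: le_trans.
Qed.

Lemma theta_admissible_J : theta_admissible adj J.
Proof. by split=> [|i j _]; [apply: trmx_const | rewrite mxE]. Qed.

Lemma weighted_adj0 : weighted_adj adj (0 : 'M[R]_n).
Proof. by split; [rewrite /symmetric_mx trmx0 | split=> [i|i j _ _]; rewrite mxE]. Qed.

Lemma weighted_adj_subJ B : theta_admissible adj B -> weighted_adj adj (B - J).
Proof.
case=> sB B1; split; first by rewrite /symmetric_mx linearB /= sB trmx_const.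
by split=> [i|i j ij nij]; rewrite !mxE B1 ?eqxx ?nij ?orbT ?subrr.
Qed.

Lemma sph_value_le_lambda_max B : theta_admissible adj B ->
  sph_value (B - J) <= lambda_max B.
Proof.
move=> admB; have l0 := lambda_max_theta_ge0 admB.
apply: ge_sup.
  by exists 0, 0; [split; [apply: sphereS0 | apply: quad_form0] | apply: sqnorm0].
move=> y [v [Sv /eqP]]; rewrite quad_formBl quad_form_const1 subr_eq0 Sv => /eqP Bv <-.
have [->|/sqnorm_gt0 vp] := eqVneq v 0; first by rewrite sqnorm0.
by have := lambda_max_rayleigh v (proj1 admB); rewrite Bv expr2 ler_pM2r.
Qed.

Lemma theta_admissible_le_sph_value A : weighted_adj adj A ->
  exists2 B, theta_admissible adj B & lambda_max B <= sph_value A.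
Proof.
case=> sA [A_diag A_adj]; set s := sph_value A.
have quadP x : quad_form (s%:M - J) x = s * sqnorm x - ones_dot x ^+ 2.
  by rewrite quad_formBl quad_form_scalar quad_form_const1.
have PA z : quad_form A z = 0 -> 0 <= quad_form (s%:M - J) z.
  by move=> /ones_dot_sqr_le; rewrite quadP subr_ge0.
have [t Pt] : exists t, forall x, 0 <= quad_form (s%:M - J) x + t * quad_form A x.
  have [A0|nA] := eqVneq A 0.
    by exists 0 => x; rewrite mul0r addr0 PA // A0 /quad_form mulmx0 mul0mx mxE.
  have [pos neg] := zero_diag_indefinite sA A_diag nA.
  by apply: finsler; rewrite // linearB /= tr_scalar_mx trmx_const.
exists (J - t *: A).
  split=> [|i j]; first by rewrite /symmetric_mx linearB linearZ /= trmx_const sA.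
  by have [<- _|ij /= nij] := eqVneq i j; rewrite !mxE ?A_diag ?A_adj // mulr0 subr0.
apply: lambda_max_le => [|x]; first exact: sph_value_ge0.
by have := Pt x; rewrite quadP quad_formBl quad_formZl quad_form_const1; lra.
Qed.

End SphericalIndependence.

Theorem lemma1 (R : realType) (n : nat) (adj : rel 'I_n) :
  simple_graph adj -> lovasz_theta R adj = spherical_indep R adj.
Proof.
move=> _; pose J : 'M[R]_n := const_mx 1.
apply/le_anti/andP; split; apply: inf_le_dominated.
- by exists 0 => _ [B admB <-]; apply: lambda_max_theta_ge0 admB.
- by exists (sph_value (0 : 'M[R]_n)), 0; first exact: weighted_adj0.
- move=> _ [A adjA <-]; have [B admB le_BA] := theta_admissible_le_sph_value adjA.
  by exists (lambda_max B); first exists B.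
- by exists 0 => _ [A _ <-]; apply: sph_value_ge0.
- by exists (lambda_max J), J; first exact: theta_admissible_J.
- move=> _ [B admB <-]; exists (sph_value (B - J)).
    by exists (B - J) => //; apply: weighted_adj_subJ.
  exact: sph_value_le_lambda_max admB.
Qed.
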